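(* Let $A\in\mathbb{R}^{m\times n}$ with $m\ge n$ have singular value decomposition $A=U\Sigma V^T$ with singular values $\sigma_1\ge\cdots\ge\sigma_k>\theta>\sigma_{k+1}\ge\cdots\ge\sigma_n$ for a threshold $\theta>0$. Let $b\le k$, $q\ge0$ be integers, $\Omega_1$ an $n\times b$ standard Gaussian matrix, $\widehat Q_1\in\mathbb{R}^{m\times b}$ a matrix with orthonormal columns spanning the range of $(AA^T)^qA\Omega_1$, $\widehat U_1$ a $b\times b$ orthogonal matrix of eigenvectors of $\widehat Q_1^TAA^T\widehat Q_1$ (decreasing eigenvalue order), and $Q_1=\widehat Q_1\widehat U_1$. Let $\epsilon=\mathbf{d}(\mathcal{R}(Q_1),\mathcal{R}_\theta(A))$ and suppose \[\epsilon<1\quad\text{and}\quad \sigma_k-\epsilon\|A\|_2>\theta>\sigma_{k+1}+\epsilon\|A\|_2 .\] Let $B=(I_m-Q_1Q_1^T)A$. Then $B$ maintains the singular values of $A$ below $\theta$ with absolute error not exceeding $\epsilon\|A\|_2$, in the sense that $|\sigma_{k-b+i}(B)-\sigma_{k+i}|\le\epsilon\|A\|_2$ for $i=1,\dots,n-k$; and \[\mathrm{rank}_\theta(B)=\mathrm{rank}_\theta(A)-b .\]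
   Context: $\sigma_j(M)$ is the $j$-th largest singular value of $M$. The numerical range $\mathcal{R}_\theta(A)$ is the span of the first $k$ left singular vectors $u_1,\dots,u_k$ of $A$ (those with singular values $>\theta$), and $\mathrm{rank}_\theta(M)$ (numerical rank) is the number of singular values of $M$ exceeding $\theta$. For matrices $W,Z$ with orthonormal columns, $\mathbf{d}(\mathcal{R}(W),\mathcal{R}(Z))=\|(I-ZZ^T)WW^T\|_2$; for a subspace, use an orthonormal basis for $Z$. *)

From HB Require Import structures.
From mathcomp Require Import all_boot all_order all_algebra.
From mathcomp Require Import boolp classical_sets reals.
Set Implicit Arguments. Unset Strict Implicit. Unset Printing Implicit Defensive.
Import Order.TTheory GRing.Theory Num.Theory.
Local Open Scope classical_set_scope.
Local Open Scope ring_scope.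

Section Defs.
Variable R : realType.

Definition vnorm n (x : 'cV[R]_n) : R := Num.sqrt (\sum_i x i 0 ^+ 2).

Definition opnorm m n (M : 'M[R]_(m, n)) : R :=
  reals.sup [set vnorm (M *m x) | x in [set x : 'cV[R]_n | vnorm x = 1]].

Definition rdiag m n (s : nat -> R) : 'M[R]_(m, n) :=
  \matrix_(i, j) if (i : nat) == (j : nat) then s (j : nat) else 0.

Definition orthogonal_mx n (U : 'M[R]_n) := U^T *m U = 1%:M.

Definition orthonormal_cols m n (Q : 'M[R]_(m, n)) := Q^T *m Q = 1%:M.

(* A = U Sigma V^T is a singular value decomposition with singular values
   s 0 >= s 1 >= ... >= s (n-1) >= 0 (0-based indexing; s j for j >= n is
   irrelevant). *)
Definition is_svd m n (A : 'M[R]_(m, n)) (U : 'M[R]_m) (s : nat -> R)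
    (V : 'M[R]_n) :=
  [/\ orthogonal_mx U, orthogonal_mx V,
      (forall j, (j < n)%N -> 0 <= s j),
      (forall i j, (i <= j < n)%N -> s j <= s i) &
      A = U *m rdiag m n s *m V^T].

Definition num_rank (theta : R) n (s : nat -> R) : nat :=
  #|[set j : 'I_n | theta < s (j : nat)]|.

(* Z Z^T where Z = first k columns of U (orthonormal basis of R_theta(A)) *)
Definition lead_proj m (U : 'M[R]_m) (k : nat) : 'M[R]_m :=
  \sum_(j < m | (j < k)%N) col j U *m (col j U)^T.

(* d(R(W), R(Z)) = || (I - Z Z^T) W W^T ||_2 given projectors *)
Definition subspace_dist m (PW PZ : 'M[R]_m) : R :=
  opnorm ((1%:M - PZ) *m PW).

End Defs.

From HB Require Import structures.
From mathcomp Require Import all_boot all_order all_algebra.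
From mathcomp Require Import boolp classical_sets reals.
From mathcomp Require Import zify lra.
Import Order.TTheory GRing.Theory Num.Theory.
Local Open Scope ring_scope.

(* Let P = Q1 Q1^T and let Z project onto the leading k left singular vectors,
   so that eps = |(1 - Z) P|.  Both estimates are min-max arguments with
   subspaces spanned by right singular vectors v_l.  Lower bound: on the span of
   v_0, ..., v_(j+b) cut down by the kernel of P A (codimension <= b), B acts
   as A, hence sigma_j(B) >= sigma_(j+b)(A).  Upper bound: since eps < 1, Z P
   still has rank b; on the span of the v_l with l outside [k, k+i) cut down by
   the condition Z A u \in Z(range P) (codimension <= k - b), B u splits as
   (1 - P) Z A u, of norm <= eps |A u| because a vector of range P close to
   range Z has its Z-projection close to range P, plus (1 - P)(1 - Z) A u, of
   norm <= sigma_(k+i)(A) |u|.  The gap conditions turn these bounds into the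
   numerical rank, the last b singular values of B vanishing since range P lies
   in range A. *)

Set Implicit Arguments. Unset Strict Implicit. Unset Printing Implicit Defensive.

Section DotProduct.
Variables (R : realType) (n : nat).
Implicit Types x y z : 'cV[R]_n.

Definition dot x y : R := \sum_i x i 0 * y i 0.

Lemma dotE x y : dot x y = (x^T *m y) 0 0.
Proof. by rewrite !mxE; apply: eq_bigr => i _; rewrite mxE. Qed.

Lemma dotC x y : dot x y = dot y x.
Proof. by apply: eq_bigr => i _; rewrite mulrC. Qed.

Lemma dotDl x y z : dot (x + y) z = dot x z + dot y z.
Proof. by rewrite /dot -big_split; apply: eq_bigr => i _; rewrite mxE mulrDl. Qed.

Lemma dotDr x y z : dot x (y + z) = dot x y + dot x z.
Proof. by rewrite dotC dotDl ![dot _ x]dotC. Qed.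

Lemma dotNl x y : dot (- x) y = - dot x y.
Proof. by rewrite /dot -sumrN; apply: eq_bigr => i _; rewrite mxE mulNr. Qed.

Lemma dotZl a x y : dot (a *: x) y = a * dot x y.
Proof. by rewrite /dot mulr_sumr; apply: eq_bigr => i _; rewrite mxE mulrA. Qed.

Lemma dot0l y : dot 0 y = 0.
Proof. by rewrite /dot big1 // => i _; rewrite mxE mul0r. Qed.

Lemma dot_ge0 x : 0 <= dot x x.
Proof. by apply: sumr_ge0 => i _; rewrite -expr2 sqr_ge0. Qed.

Lemma dot_eq0 x : (dot x x == 0) = (x == 0).
Proof.
apply/idP/eqP => [|->]; last by rewrite dot0l.
rewrite psumr_eq0 => [/allP x0|i _]; last by rewrite -expr2 sqr_ge0.
apply/matrixP => i j; rewrite ord1 mxE.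
by have := x0 i (mem_index_enum _); rewrite -expr2 sqrf_eq0 => /eqP.
Qed.

(* Cauchy-Schwarz: expand [0 <= |(y.y) x - (x.y) y|^2]. *)
Lemma dot_sqr_le x y : dot x y ^+ 2 <= dot x x * dot y y.
Proof.
have [/eqP|y0] := eqVneq (dot y y) 0.
  by rewrite dot_eq0 => /eqP ->; rewrite dotC !dot0l expr0n /= mulr0.
have y_gt0 : 0 < dot y y by rewrite lt_def y0 dot_ge0.
have := dot_ge0 (dot y y *: x - dot x y *: y).
rewrite !(dotDl, dotDr, dotNl, dotZl) ![dot _ (- _)]dotC ![dot _ (_ *: _)]dotC.
rewrite !(dotNl, dotZl) [dot y x]dotC => expand_ge0.
have : 0 <= dot y y * (dot y y * dot x x - dot x y ^+ 2) by nra.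
by rewrite pmulr_rge0 // subr_ge0 mulrC.
Qed.

Lemma vnormE x : vnorm x = Num.sqrt (dot x x).
Proof. by congr Num.sqrt; apply: eq_bigr => i _; rewrite expr2. Qed.

Lemma vnorm_ge0 x : 0 <= vnorm x.
Proof. by rewrite vnormE sqrtr_ge0. Qed.

Lemma vnorm_sqr x : vnorm x ^+ 2 = dot x x.
Proof. by rewrite vnormE sqr_sqrtr // dot_ge0. Qed.

Lemma vnorm_eq0 x : (vnorm x == 0) = (x == 0).
Proof. by rewrite -dot_eq0 -vnorm_sqr sqrf_eq0. Qed.

Lemma vnorm_gt0 x : (0 < vnorm x) = (x != 0).
Proof. by rewrite lt_def vnorm_ge0 vnorm_eq0 andbT. Qed.

Lemma vnorm0 : vnorm (0 : 'cV[R]_n) = 0.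
Proof. by apply/eqP; rewrite vnorm_eq0. Qed.

Lemma vnormZ a x : vnorm (a *: x) = `|a| * vnorm x.
Proof.
rewrite !vnormE dotZl dotC dotZl mulrA -expr2 sqrtrM ?sqr_ge0 //.
by rewrite sqrtr_sqr.
Qed.

Lemma dot_le_vnorm x y : dot x y <= vnorm x * vnorm y.
Proof.
have := dot_sqr_le x y; rewrite -!vnorm_sqr -exprMn => h.
have xy_ge0 : 0 <= vnorm x * vnorm y by rewrite mulr_ge0 ?vnorm_ge0.
have [/le_trans->//|dot_gt0] := lerP (dot x y) 0.
by rewrite -(@ler_pXn2r _ 2) // nnegrE ltW.
Qed.

Lemma vnormD_le x y : vnorm (x + y) <= vnorm x + vnorm y.
Proof.
rewrite -(@ler_pXn2r _ 2) ?nnegrE ?addr_ge0 ?vnorm_ge0 //.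
rewrite vnorm_sqr dotDl !dotDr [dot y x]dotC.
have := dot_le_vnorm x y; rewrite -!vnorm_sqr; nra.
Qed.

Lemma normr_coord_le_vnorm x i : `|x i 0| <= vnorm x.
Proof.
rewrite -(@ler_pXn2r _ 2) ?nnegrE ?normr_ge0 ?vnorm_ge0 //.
rewrite vnorm_sqr real_normK ?num_real // /dot (bigD1 i) //= expr2 lerDl.
by apply: sumr_ge0 => j _; rewrite -expr2 sqr_ge0.
Qed.

End DotProduct.

Lemma dot_mulmxl (R : realType) m n (M : 'M[R]_(m, n)) x y :
  dot (M *m x) y = dot x (M^T *m y).
Proof. by rewrite !dotE trmx_mul mulmxA. Qed.

Lemma orthogonal_mxT (R : realType) n (U : 'M[R]_n) :
  orthogonal_mx U -> U *m U^T = 1%:M.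
Proof. exact: mulmx1C. Qed.

Lemma dot_orthogonal (R : realType) n (U : 'M[R]_n) x y :
  orthogonal_mx U -> dot (U *m x) (U *m y) = dot x y.
Proof. by move=> U_orth; rewrite dot_mulmxl mulmxA U_orth mul1mx. Qed.

Lemma vnorm_le_dot (R : realType) m n (x : 'cV[R]_m) (y : 'cV[R]_n) c :
  0 <= c -> dot x x <= c ^+ 2 * dot y y -> vnorm x <= c * vnorm y.
Proof.
move=> c_ge0; rewrite -!vnorm_sqr -exprMn.
by rewrite ler_pXn2r ?nnegrE ?mulr_ge0 ?vnorm_ge0.
Qed.

Lemma vnorm_ge_dot (R : realType) m n (x : 'cV[R]_m) (y : 'cV[R]_n) c :
  0 <= c -> c ^+ 2 * dot y y <= dot x x -> c * vnorm y <= vnorm x.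
Proof.
move=> c_ge0; rewrite -!vnorm_sqr -exprMn.
by rewrite ler_pXn2r ?nnegrE ?mulr_ge0 ?vnorm_ge0.
Qed.

Section OperatorNorm.
Variables (R : realType) (m n : nat) (M : 'M[R]_(m, n)).
Local Open Scope classical_set_scope.

Lemma opnorm_ubound :
  has_ubound [set vnorm (M *m x) | x in [set x : 'cV[R]_n | vnorm x = 1]].
Proof.
exists (Num.sqrt (\sum_i (\sum_j `|M i j|) ^+ 2)) => _ [x /= x1 <-].
rewrite ler_sqrt; last by apply: sumr_ge0 => i _; rewrite sqr_ge0.
apply: ler_sum => i _; rewrite -real_normK ?num_real //.
rewrite lerXn2r ?nnegrE ?normr_ge0 ?sumr_ge0 //.
rewrite mxE; apply: le_trans (ler_norm_sum _ _ _) _.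
apply: ler_sum => j _; rewrite normrM -[leRHS]mulr1 ler_wpM2l //.
by rewrite -x1 normr_coord_le_vnorm.
Qed.

Lemma vnorm_mulmx_le x : vnorm (M *m x) <= opnorm M * vnorm x.
Proof.
have [->|x0] := eqVneq x 0; first by rewrite mulmx0 !vnorm0 mulr0.
have x_gt0 : 0 < vnorm x by rewrite vnorm_gt0.
set y := (vnorm x)^-1 *: x.
have y1 : vnorm y = 1 by rewrite vnormZ ger0_norm ?mulVf ?gt_eqF // invr_ge0 ltW.
have : vnorm (M *m y) <= opnorm M.
  apply: sup_upper_bound; last by exists y.
  by split; [exists (vnorm (M *m y)), y | exact: opnorm_ubound].
have ix_gt0 : 0 < (vnorm x)^-1 by rewrite invr_gt0.
rewrite -scalemxAr vnormZ ger0_norm ?(ltW ix_gt0) // => My_le.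
by rewrite -(ler_pM2l ix_gt0) mulrCA mulVf ?gt_eqF ?mulr1.
Qed.

Lemma opnorm_ge0 : 0 <= opnorm M.
Proof.
rewrite /opnorm; set E := [set _ | x in _].
have [->|/set0P E0] := eqVneq E set0; first by rewrite sup0.
have [? [x x1 _]] := E0.
apply: le_trans (vnorm_ge0 (M *m x)) (sup_upper_bound _ _); last by exists x.
by split=> //; exact: opnorm_ubound.
Qed.

End OperatorNorm.

Section OrthogonalProjection.
Variables (R : realType) (m : nat) (P : 'M[R]_m).
Hypotheses (P_sym : P^T = P) (P_idem : P *m P = P).
Implicit Types x : 'cV[R]_m.

Lemma compl_proj_sym : (1%:M - P)^T = 1%:M - P.
Proof. by rewrite linearB /= trmx1 P_sym. Qed.

Lemma mulmx_proj_compl : P *m (1%:M - P) = 0.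
Proof. by rewrite mulmxBr mulmx1 P_idem subrr. Qed.

Lemma dot_proj_compl x : dot (P *m x) ((1%:M - P) *m x) = 0.
Proof. by rewrite dot_mulmxl P_sym mulmxA mulmx_proj_compl mul0mx dotC dot0l. Qed.

Lemma dot_proj_split x :
  dot x x = dot (P *m x) (P *m x) + dot ((1%:M - P) *m x) ((1%:M - P) *m x).
Proof.
have {1 2}-> : x = P *m x + (1%:M - P) *m x by rewrite mulmxBl mul1mx addrC subrK.
rewrite dotDl !dotDr dot_proj_compl [dot ((1%:M - P) *m x) _]dotC dot_proj_compl.
by rewrite addr0 add0r.
Qed.

Lemma vnorm_proj_le x : vnorm (P *m x) <= vnorm x.
Proof.
rewrite -[leRHS]mul1r; apply: vnorm_le_dot => //.
by rewrite expr1n mul1r [leRHS]dot_proj_split lerDl dot_ge0.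
Qed.

Lemma vnorm_compl_proj_le x : vnorm ((1%:M - P) *m x) <= vnorm x.
Proof.
rewrite -[leRHS]mul1r; apply: vnorm_le_dot => //.
by rewrite expr1n mul1r [leRHS]dot_proj_split lerDr dot_ge0.
Qed.

End OrthogonalProjection.

Section TwoProjections.
Variables (R : realType) (m : nat) (P Z : 'M[R]_m).
Hypotheses (P_sym : P^T = P) (P_idem : P *m P = P).
Hypotheses (Z_sym : Z^T = Z) (Z_idem : Z *m Z = Z).

(* With z := Z w we have <P z, w> = <z, w> = |z|^2, so Cauchy-Schwarz and
   |w|^2 = |z|^2 + |(1 - Z) w|^2 <= |z|^2 + e^2 |w|^2 give
   (1 - e^2) |z|^2 <= |P z|^2, i.e. |(1 - P) z| <= e |z|. *)
Lemma vnorm_compl_swap e w : 0 <= e -> P *m w = w ->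
    vnorm ((1%:M - Z) *m w) <= e * vnorm w ->
  vnorm ((1%:M - P) *m (Z *m w)) <= e * vnorm (Z *m w).
Proof.
move=> e_ge0 Pw Zw_le.
have [e_ge1|e_lt1] := lerP 1 e.
  exact: le_trans (vnorm_compl_proj_le P_sym P_idem _) (ler_peMl (vnorm_ge0 _) e_ge1).
have w_split := dot_proj_split Z_sym Z_idem w.
set z := Z *m w in w_split *.
have z_split := dot_proj_split P_sym P_idem z.
have Pzw : dot (P *m z) w = dot z z.
  by rewrite dot_mulmxl P_sym Pw /z !dot_mulmxl Z_sym mulmxA Z_idem.
have cs := dot_sqr_le (P *m z) w; rewrite Pzw in cs.
have {}Zw_le : dot ((1%:M - Z) *m w) ((1%:M - Z) *m w) <= e ^+ 2 * dot w w.
  by rewrite -!vnorm_sqr -exprMn lerXn2r // nnegrE ?mulr_ge0 ?vnorm_ge0.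
have e2_ge0 : 0 <= 1 - e ^+ 2 by rewrite expr2; nra.
have w_le : (1 - e ^+ 2) * dot w w <= dot z z by lra.
have Pz_ge : (1 - e ^+ 2) * dot z z <= dot (P *m z) (P *m z).
  have [->|z_ne0] := eqVneq (dot z z) 0; first by rewrite mulr0 dot_ge0.
  have z_gt0 : 0 < dot z z by rewrite lt_def z_ne0 dot_ge0.
  by rewrite -(ler_pM2r z_gt0); have := dot_ge0 (P *m z); nra.
by apply: vnorm_le_dot => //; lra.
Qed.

Lemma vnorm_compl_proj_split e x w : 0 <= e -> P *m w = w -> Z *m x = Z *m w ->
    vnorm ((1%:M - Z) *m w) <= e * vnorm w ->
  vnorm ((1%:M - P) *m x) <= vnorm ((1%:M - Z) *m x) + e * vnorm x.
Proof.
move=> e_ge0 Pw Zxw Zw_le.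
have {1}-> : x = Z *m x + (1%:M - Z) *m x by rewrite mulmxBl mul1mx addrC subrK.
rewrite mulmxDr; apply: le_trans (vnormD_le _ _) _.
rewrite [leRHS]addrC lerD ?(vnorm_compl_proj_le P_sym P_idem) //.
rewrite Zxw; apply: le_trans (vnorm_compl_swap e_ge0 Pw Zw_le) _.
by rewrite -Zxw ler_wpM2l // (vnorm_proj_le Z_sym Z_idem).
Qed.

Lemma mxrank_proj_mul e : e < 1 ->
    (forall w, vnorm ((1%:M - Z) *m P *m w) <= e * vnorm w) ->
  \rank (P *m Z) = \rank P.
Proof.
move=> e_lt1 PZ_le; have <- := mxrank_mul_ker P Z.
suff -> : \rank (P :&: kermx Z)%MS = 0%N by rewrite addn0.
apply/eqP; rewrite mxrank_eq0; apply/eqP/row_matrixP => r; rewrite row0.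
set v := row r _.
have /submxP [y defv] : (v <= P)%MS := submx_trans (row_sub _ _) (capmxSl _ _).
have /sub_kermxP vZ : (v <= kermx Z)%MS := submx_trans (row_sub _ _) (capmxSr _ _).
have Pv : P *m v^T = v^T by rewrite defv trmx_mul P_sym mulmxA P_idem.
have Zv : Z *m v^T = 0 by rewrite -Z_sym -trmx_mul vZ trmx0.
have := PZ_le v^T; rewrite -mulmxA Pv mulmxBl mul1mx Zv subr0 => v_le.
have /eqP : vnorm v^T = 0 by have := vnorm_ge0 v^T; nra.
by rewrite vnorm_eq0 -trmx0 (inj_eq trmx_inj) => /eqP.
Qed.

End TwoProjections.

Section OrthonormalColumns.
Variables (R : realType) (m b : nat) (Q : 'M[R]_(m, b)).
Hypothesis Q_on : orthonormal_cols Q.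

Lemma orthonormal_cols_mulmx (W : 'M[R]_b) :
  orthogonal_mx W -> orthonormal_cols (Q *m W).
Proof.
by move=> W_orth; rewrite /orthonormal_cols trmx_mul -mulmxA (mulmxA Q^T) Q_on mul1mx.
Qed.

Lemma orthonormal_proj_sym : (Q *m Q^T)^T = Q *m Q^T.
Proof. by rewrite trmx_mul trmxK. Qed.

Lemma orthonormal_proj_idem : Q *m Q^T *m (Q *m Q^T) = Q *m Q^T.
Proof. by rewrite mulmxA -(mulmxA Q) Q_on mulmx1. Qed.

Lemma mxrank_orthonormal_proj : \rank (Q *m Q^T) = b.
Proof.
apply/eqP; rewrite eqn_leq (leq_trans (mxrankM_maxl _ _) (rank_leq_col _)) /=.
rewrite -{1}(mxrank1 R b) -Q_on -{1}[Q^T *m Q]mulmx1 -{1}Q_on !mulmxA.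
by rewrite -(mulmxA _ Q) (leq_trans (mxrankM_maxl _ _) (mxrankM_maxr _ _)).
Qed.

End OrthonormalColumns.

Lemma krylov_proj_sub_range (R : realType) m n p b q (A : 'M[R]_(m, n))
    (O : 'M[R]_(n, p)) (Q : 'M[R]_(m, b)) (W : 'M[R]_b) :
    (Q^T == (iter q (mulmx (A *m A^T)) (A *m O))^T)%MS ->
  (Q *m W *m (Q *m W)^T <= A^T)%MS.
Proof.
case/andP => QK _; apply: submx_trans (submxMl _ _) _; rewrite trmx_mul.
apply: submx_trans (submxMl _ _) (submx_trans QK _).
by case: q {QK} => [|q] /=; rewrite -?mulmxA trmx_mul submxMl.
Qed.

Lemma mxrank_mul_cokermx_le (F : fieldType) m n p
    (Y : 'M[F]_(m, n)) (W : 'M[F]_(p, n)) :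
  (W <= Y)%MS -> (\rank (Y *m cokermx W) + \rank W <= \rank Y)%N.
Proof.
move=> WY; rewrite -(mxrank_mul_ker Y (cokermx W)) leq_add2l; apply: mxrankS.
by rewrite sub_capmx WY sub_kermx -submxE submx_refl.
Qed.

Lemma mxrank_cap_ge (F : fieldType) n r p (X : 'M[F]_(r, n)) (Y : 'M[F]_(p, n)) :
  (\rank X + \rank Y <= \rank (X :&: Y)%MS + n)%N.
Proof. by rewrite -mxrank_sum_cap addnC leq_add2l rank_leq_col. Qed.

Lemma exists_nonzero_capmx (F : fieldType) n r p (X : 'M[F]_(r, n)) (Y : 'M[F]_(p, n)) :
  (n < \rank X + \rank Y)%N -> exists2 u : 'rV[F]_n, u != 0 & (u <= X :&: Y)%MS.
Proof.
move=> rXY; have : \rank (X :&: Y)%MS != 0%N by have := mxrank_cap_ge X Y; lia.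
rewrite mxrank_eq0; case: (pickP (fun i => row i (X :&: Y)%MS != 0)) => [i ri0 _|rows0].
  by exists (row i (X :&: Y)%MS); rewrite ?row_sub.
by case/negP; apply/eqP/row_matrixP => i; move/negbFE/eqP: (rows0 i) ->; rewrite row0.
Qed.

Lemma mxrank_compl_proj_mul (R : realType) m n (A : 'M[R]_(m, n)) (P : 'M[R]_m) :
    P^T = P -> P *m P = P -> (P <= A^T)%MS ->
  (\rank ((1%:M - P) *m A) + \rank P <= n)%N.
Proof.
move=> P_sym P_idem PA; rewrite -mxrank_tr trmx_mul compl_proj_sym //.
apply: leq_trans (rank_leq_row A^T); rewrite -(mxrank_mul_ker A^T (1%:M - P)).
rewrite leq_add2l mxrankS // sub_capmx PA.
by apply/sub_kermxP; rewrite mulmx_proj_compl.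
Qed.

Lemma card_set_ord n (p : pred nat) : #|[set l : 'I_n | p l]| = count p (iota 0 n).
Proof.
rewrite -val_enum_ord count_map cardsE cardE /enum_mem size_filter count_filter.
by apply: eq_count => l; rewrite /= !inE andbT.
Qed.

Lemma card_ord_lt n t : #|[set l : 'I_n | (l < t)%N]| = minn t n.
Proof.
rewrite (card_set_ord n (fun l => (l < t)%N)).
elim: n => [|n IHn]; first by rewrite minn0.
by rewrite -addn1 iotaD count_cat IHn /= add0n addn0; case: ltnP; lia.
Qed.

Lemma card_ord_ge n t : #|[set l : 'I_n | (t <= l)%N]| = (n - t)%N.
Proof.
have := cardsC [set l : 'I_n | (l < t)%N]; rewrite card_ord card_ord_lt.
rewrite (_ : ~: _ = [set l : 'I_n | (t <= l)%N]); first lia.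
by apply/setP => l; rewrite !inE -leqNgt.
Qed.

Lemma card_ord_outside n k i : (k + i <= n)%N ->
  #|[set l : 'I_n | (l < k)%N] :|: [set l : 'I_n | (k + i <= l)%N]| = (n - i)%N.
Proof.
move=> le_kin; rewrite cardsU card_ord_lt card_ord_ge.
rewrite (@eq_card0 _ (_ :&: _)); first lia.
by move=> l; rewrite !inE; apply/negbTE/andP; lia.
Qed.

Section DiagonalForm.
Variables (R : realType) (m n : nat) (U : 'M[R]_m) (s : nat -> R) (V : 'M[R]_n).
Hypotheses (le_nm : (n <= m)%N) (U_orth : orthogonal_mx U) (V_orth : orthogonal_mx V).

Lemma rdiag_pid_diag : rdiag m n s = pid_mx n *m diag_mx (\row_(j < n) s j).
Proof.
apply/matrixP => i j; rewrite mul_mx_diag !mxE.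
by case: eqP => [->|_]; rewrite ?ltn_ord ?mul1r ?mul0r.
Qed.

Lemma dot_udv x :
  dot (U *m rdiag m n s *m V^T *m x) (U *m rdiag m n s *m V^T *m x)
  = \sum_(l < n) s l ^+ 2 * (V^T *m x) l 0 ^+ 2.
Proof.
rewrite -!mulmxA dot_orthogonal // rdiag_pid_diag -!mulmxA dot_mulmxl.
rewrite tr_pid_mx (mulmxA (pid_mx n)) mul_pid_mx minnn (minn_idPr le_nm).
rewrite pid_mx_1 mul1mx.
by rewrite /dot; apply: eq_bigr => l _; rewrite mul_diag_mx !mxE -exprMn expr2.
Qed.

Lemma dot_rsv_coords x : dot x x = \sum_(l < n) (V^T *m x) l 0 ^+ 2.
Proof.
rewrite (_ : \sum_l _ = dot (V^T *m x) (V^T *m x)).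
  by rewrite dot_mulmxl trmxK mulmxA orthogonal_mxT // mul1mx.
by apply: eq_bigr => l _; rewrite expr2.
Qed.

Definition rsv_span (S : {set 'I_n}) : 'M[R]_(#|S|, n) := rowsub enum_val V^T.

Lemma tr_rsv_span S : (rsv_span S)^T = colsub enum_val V.
Proof. by apply/matrixP => i j; rewrite !mxE. Qed.

Lemma rsv_span_mulmx_tr S : rsv_span S *m (rsv_span S)^T = 1%:M.
Proof.
rewrite tr_rsv_span -mxsub_mul V_orth; apply/matrixP => r r'.
by rewrite !mxE (inj_eq enum_val_inj).
Qed.

Lemma rank_rsv_span S : \rank (rsv_span S) = #|S|.
Proof.
apply/eqP; rewrite eqn_leq rank_leq_row /=.
by rewrite -{1}(mxrank1 R #|S|) -(rsv_span_mulmx_tr S) mxrankM_maxl.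
Qed.

Lemma rsv_coord_notin S (u : 'rV[R]_n) l :
  (u <= rsv_span S)%MS -> l \notin S -> (V^T *m u^T) l 0 = 0.
Proof.
move=> /submxP [w ->] lS; rewrite trmx_mul mulmxA.
have -> : V^T *m (rsv_span S)^T = colsub enum_val 1%:M.
  by rewrite tr_rsv_span mulmx_colsub V_orth.
rewrite mxE big1 // => r _; rewrite !mxE; case: eqP => [lr|]; last by rewrite mul0r.
by move: lS; rewrite lr enum_valP.
Qed.

Lemma vnorm_udv_le S c (u : 'rV[R]_n) : 0 <= c -> (u <= rsv_span S)%MS ->
    (forall l, l \in S -> `|s l| <= c) ->
  vnorm (U *m rdiag m n s *m V^T *m u^T) <= c * vnorm u^T.
Proof.
move=> c_ge0 uS s_le; apply: vnorm_le_dot => //.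
rewrite dot_udv dot_rsv_coords mulr_sumr; apply: ler_sum => l _.
have [lS|lS] := boolP (l \in S); last by rewrite (rsv_coord_notin uS lS) expr0n !mulr0.
rewrite ler_wpM2r ?sqr_ge0 // -real_normK ?num_real //.
by rewrite lerXn2r ?nnegrE ?normr_ge0 ?s_le.
Qed.

Lemma vnorm_udv_ge S c (u : 'rV[R]_n) : 0 <= c -> (u <= rsv_span S)%MS ->
    (forall l, l \in S -> c <= `|s l|) ->
  c * vnorm u^T <= vnorm (U *m rdiag m n s *m V^T *m u^T).
Proof.
move=> c_ge0 uS s_ge; apply: vnorm_ge_dot => //.
rewrite dot_udv dot_rsv_coords mulr_sumr; apply: ler_sum => l _.
have [lS|lS] := boolP (l \in S); last by rewrite (rsv_coord_notin uS lS) expr0n !mulr0.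
rewrite ler_wpM2r ?sqr_ge0 // -[s l ^+ 2]real_normK ?num_real //.
by rewrite lerXn2r ?nnegrE ?normr_ge0 ?s_ge.
Qed.

End DiagonalForm.

Section CourantFischer.
Variables (R : realType) (m n : nat) (M : 'M[R]_(m, n)).
Variables (U : 'M[R]_m) (s : nat -> R) (V : 'M[R]_n).
Hypotheses (le_nm : (n <= m)%N) (svdM : is_svd M U s V).

Lemma courant_fischer_ge r (X : 'M[R]_(r, n)) c j : (j < n)%N -> (j < \rank X)%N ->
    (forall u : 'rV[R]_n, (u <= X)%MS -> c * vnorm u^T <= vnorm (M *m u^T)) ->
  c <= s j.
Proof.
move=> lt_jn lt_jX Xc; have [U_orth V_orth s_ge0 s_dec defM] := svdM.
have [c_le0|c_gt0] := lerP c 0; first exact: le_trans c_le0 (s_ge0 _ lt_jn).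
have [u u0] : exists2 u : 'rV[R]_n, u != 0 &
    (u <= X :&: rsv_span V [set l : 'I_n | (j <= l)%N])%MS.
  by apply: exists_nonzero_capmx; rewrite rank_rsv_span // card_ord_ge; lia.
rewrite sub_capmx => /andP [uX uS].
have u_gt0 : 0 < vnorm u^T by rewrite vnorm_gt0 -trmx0 (inj_eq trmx_inj).
rewrite -(ler_pM2r u_gt0); apply: le_trans (Xc u uX) _; rewrite defM.
apply: (vnorm_udv_le le_nm U_orth V_orth) uS _ => [|l]; first exact: s_ge0.
by rewrite inE => le_jl; rewrite ger0_norm ?s_ge0 // s_dec // le_jl ltn_ord.
Qed.

Lemma courant_fischer_le r (X : 'M[R]_(r, n)) c j : (j < n)%N -> (n <= \rank X + j)%N ->
    (forall u : 'rV[R]_n, (u <= X)%MS -> vnorm (M *m u^T) <= c * vnorm u^T) ->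
  s j <= c.
Proof.
move=> lt_jn le_nXj Xc; have [U_orth V_orth s_ge0 s_dec defM] := svdM.
have [u u0] : exists2 u : 'rV[R]_n, u != 0 &
    (u <= X :&: rsv_span V [set l : 'I_n | (l < j.+1)%N])%MS.
  by apply: exists_nonzero_capmx; rewrite rank_rsv_span // card_ord_lt; lia.
rewrite sub_capmx => /andP [uX uS].
have u_gt0 : 0 < vnorm u^T by rewrite vnorm_gt0 -trmx0 (inj_eq trmx_inj).
rewrite -(ler_pM2r u_gt0); apply: le_trans (Xc u uX); rewrite defM.
apply: (vnorm_udv_ge le_nm U_orth V_orth) uS _ => [|l]; first exact: s_ge0.
by rewrite inE ltnS => le_lj; rewrite ger0_norm ?s_ge0 // s_dec // le_lj.
Qed.

Lemma sv_le0_of_rank j : (\rank M <= j)%N -> (j < n)%N -> s j <= 0.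
Proof.
move=> le_Mj lt_jn; apply: (courant_fischer_le (X := kermx M^T)) => //.
  by rewrite mxrank_ker mxrank_tr; lia.
move=> u /sub_kermxP uM; rewrite mul0r.
by rewrite -[M]trmxK -trmx_mul uM trmx0 vnorm0.
Qed.

End CourantFischer.

Section LeadingProjection.
Variables (R : realType) (m : nat) (U : 'M[R]_m) (k : nat).

Lemma lead_projE : lead_proj U k = U *m pid_mx k *m U^T.
Proof.
apply/matrixP => a c; rewrite /lead_proj summxE !mxE big_mkcond /=.
apply: eq_bigr => j _; rewrite !mxE big_ord1 !mxE (bigD1 j) //= big1 ?addr0.
  by rewrite !mxE eqxx /=; case: (j < k)%N; rewrite ?mulr1 ?mulr0 ?mul0r.
move=> l lj; rewrite !mxE; case: eqP => [/val_inj lj'|_]; last by rewrite mulr0.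
by rewrite lj' eqxx in lj.
Qed.

Lemma lead_proj_sym : (lead_proj U k)^T = lead_proj U k.
Proof. by rewrite lead_projE !trmx_mul trmxK tr_pid_mx mulmxA. Qed.

Lemma mxrank_lead_proj : (\rank (lead_proj U k) <= k)%N.
Proof.
rewrite lead_projE; apply: leq_trans (mxrankM_maxl _ _) _.
apply: leq_trans (mxrankM_maxr _ _) _.
by rewrite -pid_mx_minv rank_pid_mx ?geq_minl ?geq_minr.
Qed.

Lemma mul_pid_rdiag n (s : nat -> R) :
  pid_mx k *m rdiag m n s = rdiag m n (fun l => if (l < k)%N then s l else 0).
Proof.
apply/matrixP => i j; rewrite !mxE (bigD1 i) //= big1 ?addr0.
  rewrite !mxE eqxx /=; case: eqP => [->|_]; last by rewrite mulr0.
  by case: ifP; rewrite ?mul1r ?mul0r.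
move=> l li; rewrite !mxE; case: eqP => [/val_inj il|_]; last by rewrite mul0r.
by rewrite il eqxx in li.
Qed.

Hypothesis U_orth : orthogonal_mx U.

Lemma lead_proj_idem : lead_proj U k *m lead_proj U k = lead_proj U k.
Proof.
rewrite lead_projE -!mulmxA (mulmxA U^T) U_orth mul1mx (mulmxA (pid_mx k)).
by rewrite mul_pid_mx minnn pid_mx_minv.
Qed.

Lemma compl_lead_proj_udv n (s : nat -> R) (V : 'M[R]_n) :
  (1%:M - lead_proj U k) *m (U *m rdiag m n s *m V^T)
  = U *m rdiag m n (fun l => if (l < k)%N then 0 else s l) *m V^T.
Proof.
rewrite lead_projE mulmxBl mul1mx -!mulmxA (mulmxA U^T) U_orth mul1mx.
rewrite (mulmxA (pid_mx k)) mul_pid_rdiag !mulmxA -mulmxBl -mulmxBr.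
congr (_ *m _ *m _); apply/matrixP => i j; rewrite !mxE.
by case: (_ == _); case: (_ < _)%N; rewrite ?subrr ?subr0.
Qed.

End LeadingProjection.

Section Deflation.
Variables (R : realType) (m n : nat) (A : 'M[R]_(m, n)).
Variables (U : 'M[R]_m) (s : nat -> R) (V : 'M[R]_n).
Variables (P UB : 'M[R]_m) (sB : nat -> R) (VB : 'M[R]_n).
Hypotheses (le_nm : (n <= m)%N) (svdA : is_svd A U s V).
Hypotheses (P_sym : P^T = P) (P_idem : P *m P = P).
Hypothesis svdB : is_svd ((1%:M - P) *m A) UB sB VB.

Lemma deflation_sv_lower b j : (\rank P <= b)%N -> (j + b < n)%N -> s (j + b)%N <= sB j.
Proof.
move=> le_Pb lt_jbn; have [U_orth V_orth s_ge0 s_dec defA] := svdA.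
pose S := [set l : 'I_n | (l < (j + b).+1)%N].
apply: (courant_fischer_ge le_nm svdB (X := (rsv_span V S :&: kermx (A^T *m P))%MS)).
- lia.
- have rankS : \rank (rsv_span V S) = (j + b).+1.
    by rewrite rank_rsv_span // card_ord_lt; lia.
  have := mxrank_cap_ge (rsv_span V S) (kermx (A^T *m P)).
  rewrite rankS mxrank_ker; have := mxrankM_maxr A^T P.
  set r := \rank (A^T *m P); set c := \rank (_ :&: _)%MS; lia.
move=> u; rewrite sub_capmx => /andP [uS /sub_kermxP uAP].
have PAu : P *m A *m u^T = 0.
  by have := congr1 trmx uAP; rewrite trmx0 !trmx_mul trmxK P_sym.
rewrite mulmxBl mul1mx mulmxBl PAu subr0 defA.
apply: (vnorm_udv_ge le_nm U_orth V_orth) uS _ => [|l]; first by apply: s_ge0; lia.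
by rewrite inE ltnS => le_ljb; rewrite ger0_norm ?s_ge0 // s_dec // le_ljb.
Qed.

Lemma vnorm_compl_lead_le k i (u : 'rV[R]_n) : (k + i < n)%N ->
    (u <= rsv_span V ([set l : 'I_n | (l < k)%N] :|:
                      [set l : 'I_n | (k + i <= l)%N]))%MS ->
  vnorm ((1%:M - lead_proj U k) *m A *m u^T) <= s (k + i)%N * vnorm u^T.
Proof.
move=> lt_kin uS; have [U_orth V_orth s_ge0 s_dec defA] := svdA.
rewrite defA compl_lead_proj_udv //.
apply: (vnorm_udv_le le_nm U_orth V_orth) uS _ => [|l]; first exact: s_ge0.
rewrite !inE => /orP [-> | le_kil]; first by rewrite normr0 s_ge0.
have -> : (l < k)%N = false by apply/negbTE; rewrite -leqNgt; lia.
by rewrite ger0_norm ?s_ge0 //; apply: s_dec; rewrite le_kil ltn_ord.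
Qed.

Lemma deflation_sv_upper k b (e : R) : (b <= \rank P)%N -> (b <= k)%N ->
    0 <= e -> e < 1 ->
    (forall w, vnorm ((1%:M - lead_proj U k) *m P *m w) <= e * vnorm w) ->
  forall i, (i < n - k)%N -> sB (k - b + i)%N <= s (k + i)%N + e * opnorm A.
Proof.
move=> le_bP le_bk e_ge0 e_lt1 PZ_le i lt_ink; have [U_orth V_orth _ _ _] := svdA.
have Z_sym := lead_proj_sym U k; have Z_idem := lead_proj_idem k U_orth.
set Z := lead_proj U k in PZ_le Z_sym Z_idem *.
pose F := A^T *m Z *m cokermx (P *m Z).
have rankF : (\rank F + b <= k)%N.
  have := mxrank_mul_cokermx_le (submxMl P Z).
  rewrite (mxrank_proj_mul P_sym P_idem Z_sym e_lt1 PZ_le).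
  have := mxrankM_maxr A^T (Z *m cokermx (P *m Z)); rewrite mulmxA -/F.
  have := mxrank_lead_proj U k; rewrite -/Z.
  set r := \rank (Z *m _); lia.
pose S := [set l : 'I_n | (l < k)%N] :|: [set l : 'I_n | (k + i <= l)%N].
apply: (courant_fischer_le le_nm svdB (X := (rsv_span V S :&: kermx F)%MS)).
- lia.
- have cardS : #|S| = (n - i)%N by apply: card_ord_outside; lia.
  have := mxrank_cap_ge (rsv_span V S) (kermx F).
  rewrite rank_rsv_span // mxrank_ker.
  move: cardS rankF; set t := #|S|; set r := \rank F; set c := \rank (_ :&: _)%MS; lia.
move=> u; rewrite sub_capmx => /andP [uS /sub_kermxP uF].
have /submxP [w defw] : (u *m A^T *m Z <= P *m Z)%MS by rewrite submxE -uF !mulmxA.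
have ZAu : Z *m (A *m u^T) = Z *m (P *m w^T).
  have := congr1 trmx defw; rewrite !trmx_mul !trmxK Z_sym P_sym => ->.
  by rewrite mulmxA.
have PPw : P *m (P *m w^T) = P *m w^T by rewrite mulmxA P_idem.
have := PZ_le (P *m w^T); rewrite -mulmxA PPw => Zw_le.
rewrite -mulmxA.
have := vnorm_compl_proj_split P_sym P_idem Z_sym Z_idem e_ge0 PPw ZAu Zw_le.
move/le_trans; apply.
rewrite mulrDl lerD ?mulmxA ?vnorm_compl_lead_le //; first lia.
by rewrite -mulrA ler_wpM2l // vnorm_mulmx_le.
Qed.

Lemma deflation_sv_tail b j : (P <= A^T)%MS -> (b <= \rank P)%N ->
  (n - b <= j)%N -> (j < n)%N -> sB j <= 0.
Proof.
move=> PA le_bP le_j lt_jn; apply: (sv_le0_of_rank le_nm svdB) lt_jn.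
have := mxrank_compl_proj_mul P_sym P_idem PA.
set r := \rank ((1%:M - P) *m A); lia.
Qed.

End Deflation.

Lemma num_rank_eq (R : realType) (theta : R) n (s : nat -> R) t : (t <= n)%N ->
  (forall j, (j < n)%N -> (theta < s j) = (j < t)%N) -> num_rank theta n s = t.
Proof.
move=> le_tn s_theta; rewrite /num_rank -[RHS](minn_idPl le_tn) -card_ord_lt.
apply: eq_card => j; rewrite !inE -s_theta ?ltn_ord //.
by apply/idP/idP; rewrite in_setE.
Qed.

Lemma num_rank_deflated (R : realType) (theta d : R) n k b (s sB : nat -> R) :
  0 < theta -> (b <= k <= n)%N ->
  (forall j, (j < n)%N -> (theta < s j) = (j < k)%N) ->
  (forall i j, (i <= j < n)%N -> s j <= s i) ->
  ((k < n)%N -> s k + d < theta) ->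
  (forall j, (j + b < n)%N -> s (j + b)%N <= sB j) ->
  (forall i, (i < n - k)%N -> sB (k - b + i)%N <= s (k + i)%N + d) ->
  (forall j, (n - b <= j)%N -> (j < n)%N -> sB j <= 0) ->
  num_rank theta n sB = (k - b)%N.
Proof.
move=> theta_gt0 /andP [le_bk le_kn] s_theta s_dec gap lower upper tail.
apply: num_rank_eq => [|j lt_jn]; first lia.
have [lt_jkb|le_kbj] := ltnP j (k - b).
  apply: lt_le_trans (lower j _); last lia.
  by rewrite s_theta; lia.
apply/negbTE; rewrite -leNgt.
have [lt_jnb|le_nbj] := ltnP j (n - b); last first.
  exact: le_trans (tail j le_nbj lt_jn) (ltW theta_gt0).
have lt_kn : (k < n)%N by lia.
have lt_i : (j - (k - b) < n - k)%N by lia.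
have le_s : s (k + (j - (k - b)))%N <= s k by apply: s_dec; lia.
have := upper _ lt_i; rewrite subnKC //; have := gap lt_kn; lra.
Qed.

Theorem theorem3p4 (R : realType) (m n k b q : nat)
  (A : 'M[R]_(m, n)) (U : 'M[R]_m) (s : nat -> R) (V : 'M[R]_n)
  (theta : R) (Omega1 : 'M[R]_(n, b)) (Qh1 : 'M[R]_(m, b))
  (Uh1 : 'M[R]_b) (lam : nat -> R) :
  (n <= m)%N ->
  is_svd A U s V ->
  0 < theta ->
  (k <= n)%N ->
  (forall j, (j < n)%N -> ((j < k)%N -> theta < s j) /\ ((k <= j)%N -> s j < theta)) ->
  (b <= k)%N ->
  orthonormal_cols Qh1 ->
  (Qh1^T == (iter q (mulmx (A *m A^T)) (A *m Omega1))^T)%MS ->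
  orthogonal_mx Uh1 ->
  (forall i j, (i <= j < b)%N -> lam j <= lam i) ->
  (Qh1^T *m A *m A^T *m Qh1) *m Uh1 = Uh1 *m rdiag b b lam ->
  let Q1 := Qh1 *m Uh1 in
  let eps := subspace_dist (Q1 *m Q1^T) (lead_proj U k) in
  eps < 1 ->
  ((0 < k)%N -> theta < s k.-1 - eps * opnorm A) ->
  ((k < n)%N -> s k + eps * opnorm A < theta) ->
  let B := (1%:M - Q1 *m Q1^T) *m A in
  forall (UB : 'M[R]_m) (sB : nat -> R) (VB : 'M[R]_n),
    is_svd B UB sB VB ->
    (forall i, (i < n - k)%N -> `|sB (k - b + i)%N - s (k + i)%N| <= eps * opnorm A)
    /\ num_rank theta n sB = (num_rank theta n s - b)%N.
Proof.
(* Neither the eigen-decomposition defining Uh1 (only its orthogonality) nor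
   the gap condition at s k.-1 is needed. *)
move=> le_nm svdA theta_gt0 le_kn s_theta le_bk Qh_on Qh_span Uh_orth _ _ Q1 eps
  eps_lt1 _ gap B UB sB VB svdB.
have [_ _ _ s_dec _] := svdA.
have Q1_on : orthonormal_cols Q1 := orthonormal_cols_mulmx Qh_on Uh_orth.
have P_sym := orthonormal_proj_sym Q1.
have P_idem := orthonormal_proj_idem Q1_on.
have rankP := mxrank_orthonormal_proj Q1_on.
have le_bP : (b <= \rank (Q1 *m Q1^T))%N by rewrite rankP.
have eA_ge0 : 0 <= eps * opnorm A by rewrite mulr_ge0 ?opnorm_ge0.
have lower := deflation_sv_lower le_nm svdA P_sym svdB (eq_leq rankP).
have upper : forall i, (i < n - k)%N -> sB (k - b + i)%N <= s (k + i)%N + eps * opnorm A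
  := deflation_sv_upper le_nm svdA P_sym P_idem svdB le_bP le_bk (opnorm_ge0 _) eps_lt1
       (fun w => vnorm_mulmx_le _ w).
have tail := deflation_sv_tail le_nm P_sym P_idem svdB
  (krylov_proj_sub_range Uh1 Qh_span) le_bP.
have s_theta' j : (j < n)%N -> (theta < s j) = (j < k)%N.
  move=> lt_jn; have [lt_sj gt_sj] := s_theta j lt_jn.
  by case: ltnP => [/lt_sj|/gt_sj/lt_gtF].
split.
  move=> i lt_ink; have lt_jbn : (k - b + i + b < n)%N by lia.
  have := lower _ lt_jbn; rewrite (_ : k - b + i + b = k + i)%N; last lia.
  by have := upper i lt_ink; rewrite ler_norml => up lo; apply/andP; split; lra.
rewrite (num_rank_eq le_kn s_theta').
apply: num_rank_deflated theta_gt0 _ s_theta' s_dec gap lower upper tail.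
by rewrite le_bk.
Qed.
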